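(* Let $k>0$, $d>0$, $a>0$. There exists $\Lambda>0$ such that for every $\lambda\in\mathbb{R}$ with $|\lambda|>\Lambda$ there is no $\mu\in\mathbb{C}$ with $\mathrm{Re}\,\mu\ge0$ satisfying $$\frac12\int_{-1}^{1}\frac{1-k+\mathrm{i}\,\frac{a\lambda s}{1+d\lambda^2}}{1+k\mu+\mathrm{i}k\lambda s}\,ds=1 .$$ In other words, the linearized system (L) has no non-decaying Fourier modes at high frequency: the set of wave numbers that carry unstable modes is bounded.
   Context: Let $S^2\subset\mathbb{R}^3$ be the unit sphere, with surface measure $d\Omega$ (total mass $4\pi$). Write $\mathbf{v}=(v_1,v_2,v_3)\in S^2$ and $x\in\mathbb{R}$. Fix parameters $k>0$, $d>0$, and $a=F'(0)>0$. The linearized system (L), for the unknowns $g(x,\mathbf v)$ and $S_g(x)$ and a growth rate $\mu\in\mathbb{C}$, is $$k(\mu g+v_1\partial_x g)=\rho_g+a\,v_1\partial_x S_g-g-k\rho_g,\qquad -d\,\partial_{xx}S_g+S_g=\rho_g,\qquad \rho_g=\frac1{4\pi}\int_{S^2}g\,d\Omega .$$ A nonzero solution of (L) of the form $g=\hat g(\mathbf v)e^{\mathrm{i}\lambda x}$ with growth rate $\mu$ (where $\mathrm{Re}\,\mu>-1/k$) exists exactly when $\mu$ satisfies the displayed dispersion relation. *)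

(* real analysis (Riemann integral) with complex numbers
   represented by their real and imaginary parts. *)
From Stdlib Require Import Reals.
Open Scope R_scope.

Definition cdiv_re (x1 y1 x2 y2 : R) : R :=
  (x1 * x2 + y1 * y2) / (x2 ^ 2 + y2 ^ 2).
Definition cdiv_im (x1 y1 x2 y2 : R) : R :=
  (y1 * x2 - x1 * y2) / (x2 ^ 2 + y2 ^ 2).

(* Integrand of the dispersion relation, with mu = p + i q:
     (1 - k + i a lam s / (1 + d lam^2)) / (1 + k mu + i k lam s). *)
Definition disp_re (k a d lam p q : R) (s : R) : R :=
  cdiv_re (1 - k) (a * lam * s / (1 + d * lam ^ 2)) (1 + k * p) (k * q + k * lam * s).
Definition disp_im (k a d lam p q : R) (s : R) : R :=
  cdiv_im (1 - k) (a * lam * s / (1 + d * lam ^ 2)) (1 + k * p) (k * q + k * lam * s).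

(* Writing the denominator as A + i B with A = 1 + k Re mu >= 1 and
   B = k Im mu + k lam s, the real part of the integrand is at most
   |1 - k| A / (A^2 + B^2) + |c| / 2, where c s = a lam s / (1 + d lam^2) is the
   imaginary part of the numerator.  The first term is a Lorentzian in s whose
   integral over [-1, 1] is a difference of arctangents divided by k lam, hence at
   most pi / (k |lam|), and |c| <= |a| / (d |lam|).  So the real part of the
   average is O(1 / |lam|) and cannot equal 1 at high frequency. *)

From Stdlib Require Import Reals Lra.
From Coquelicot Require Import Coquelicot.
Open Scope R_scope.

Lemma cdiv_re_le (x c s A B : R) : 1 <= A -> Rabs s <= 1 ->
  cdiv_re x (c * s) A B <= Rabs x * (A / (A ^ 2 + B ^ 2)) + Rabs c / 2.
Proof.
  intros hA hs; unfold cdiv_re.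
  assert (hD : 0 < A ^ 2 + B ^ 2) by nra.
  assert (hcsB : c * s * B <= Rabs c * Rabs B).
  { eapply Rle_trans; [apply Rle_abs|].
    rewrite !Rabs_mult.
    apply Rmult_le_compat_r; [apply Rabs_pos|].
    rewrite <- (Rmult_1_r (Rabs c)) at 2.
    apply Rmult_le_compat_l; [apply Rabs_pos | exact hs]. }
  assert (hxA : x * A <= Rabs x * A) by (apply Rmult_le_compat_r; [lra | apply Rle_abs]).
  (* AM-GM: [2 |B| <= 1 + B^2 <= A^2 + B^2] *)
  assert (hB : 2 * Rabs B <= A ^ 2 + B ^ 2).
  { rewrite <- (pow2_abs B). pose proof (pow2_ge_0 (Rabs B - 1)). nra. }
  pose proof (Rabs_pos c).
  apply (Rmult_le_reg_r (A ^ 2 + B ^ 2)); [exact hD|].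
  field_simplify; [|lra|lra].
  nra.
Qed.

Lemma is_derive_atan_affine (A b l s : R) : 0 < A ->
  is_derive (fun s => atan ((b + l * s) / A)) s (l * A / (A ^ 2 + (b + l * s) ^ 2)).
Proof.
  intros hA.
  assert (hD : 0 < A ^ 2 + (b + l * s) ^ 2) by (pose proof (pow2_ge_0 (b + l * s)); nra).
  replace (l * A / (A ^ 2 + (b + l * s) ^ 2))
    with (l / A * / (1 + ((b + l * s) / A) ^ 2)) by (field; lra).
  apply (is_derive_comp atan (fun s => (b + l * s) / A)).
  - apply is_derive_Reals, derivable_pt_lim_atan.
  - auto_derive; [lra | field; lra].
Qed.

Lemma is_RInt_lorentzian (A b l u v : R) : 0 < A -> l <> 0 ->
  is_RInt (fun s => A / (A ^ 2 + (b + l * s) ^ 2)) u v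
    ((atan ((b + l * v) / A) - atan ((b + l * u) / A)) / l).
Proof.
  intros hA hl.
  set (F := fun s => / l * atan ((b + l * s) / A)).
  replace ((atan ((b + l * v) / A) - atan ((b + l * u) / A)) / l)
    with (minus (F v) (F u)) by (unfold F, minus, plus, opp; simpl; field; lra).
  apply (@is_RInt_derive R_CompleteNormedModule F).
  - intros s _.
    replace (A / (A ^ 2 + (b + l * s) ^ 2))
      with (scal (/ l) (l * A / (A ^ 2 + (b + l * s) ^ 2))).
    + apply is_derive_scal, is_derive_atan_affine, hA.
    + unfold scal; simpl; unfold mult; simpl. field.
      split; [|exact hl]. pose proof (pow2_ge_0 (b + l * s)); nra.
  - intros s _. apply (@ex_derive_continuous R_AbsRing R_NormedModule).
    auto_derive. pose proof (pow2_ge_0 (b + l * s)). simpl in *. nra.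
Qed.

Lemma atan_sub_div_le (x y l : R) : l <> 0 -> (atan x - atan y) / l <= PI / Rabs l.
Proof.
  intros hl.
  pose proof (atan_bound x); pose proof (atan_bound y).
  eapply Rle_trans; [apply Rle_abs|].
  unfold Rdiv; rewrite Rabs_mult, Rabs_inv.
  apply Rmult_le_compat_r; [left; apply Rinv_0_lt_compat, Rabs_pos_lt, hl|].
  apply Rabs_le; lra.
Qed.

Lemma Rabs_div_1_plus_sqr_le (a d lam : R) : 0 < d -> lam <> 0 ->
  Rabs (a * lam / (1 + d * lam ^ 2)) <= Rabs a / (d * Rabs lam).
Proof.
  intros hd hl.
  pose proof (Rabs_pos_lt _ hl) as hL.
  assert (hden : 0 < 1 + d * lam ^ 2) by (pose proof (pow2_ge_0 lam); nra).
  rewrite Rabs_div by lra. rewrite Rabs_mult, (Rabs_right (1 + _)) by lra.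
  rewrite <- (pow2_abs lam) in *.
  assert (hdL : 0 < d * Rabs lam) by nra.
  apply (Rmult_le_reg_r ((1 + d * Rabs lam ^ 2) * (d * Rabs lam))); [nra|].
  field_simplify; [|lra|lra].
  pose proof (Rabs_pos a). nra.
Qed.

Lemma RInt_disp_re_le (k a d lam p q : R) : 0 < k -> 0 < d -> 0 <= p -> lam <> 0 ->
  ex_RInt (disp_re k a d lam p q) (-1) 1 ->
  RInt (disp_re k a d lam p q) (-1) 1 <= (Rabs (1 - k) * PI / k + Rabs a / d) / Rabs lam.
Proof.
  intros hk hd hp hl hint.
  set (A := 1 + k * p); set (c := a * lam / (1 + d * lam ^ 2)).
  assert (hA : 1 <= A) by (unfold A; nra).
  assert (hkl : k * lam <> 0) by (apply Rmult_integral_contrapositive; lra).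
  set (I := (atan ((k * q + k * lam * 1) / A) - atan ((k * q + k * lam * -1) / A)) / (k * lam)).
  assert (hbound : is_RInt
      (fun s => Rabs (1 - k) * (A / (A ^ 2 + (k * q + k * lam * s) ^ 2)) + Rabs c / 2)
      (-1) 1 (Rabs (1 - k) * I + Rabs c)).
  { replace (Rabs (1 - k) * I + Rabs c)
      with (plus (scal (Rabs (1 - k)) I) (scal (1 - -1) (Rabs c / 2)))
      by (unfold plus, scal; simpl; unfold mult; simpl; field).
    apply (@is_RInt_plus R_NormedModule); [apply (@is_RInt_scal R_NormedModule), is_RInt_lorentzian; lra | apply (@is_RInt_const R_NormedModule)]. }
  eapply Rle_trans.
  { apply RInt_le; [lra | exact hint | eexists; exact hbound |].
    intros s hs. unfold disp_re.
    replace (a * lam * s / (1 + d * lam ^ 2)) with (c * s) by (unfold c; field; nra).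
    apply cdiv_re_le; [exact hA | apply Rabs_le; lra]. }
  rewrite (is_RInt_unique _ _ _ _ hbound).
  assert (hI : I <= PI / (k * Rabs lam)).
  { rewrite <- (Rabs_right k) by lra. rewrite <- Rabs_mult. apply atan_sub_div_le, hkl. }
  pose proof (Rabs_div_1_plus_sqr_le a d lam hd hl).
  pose proof (Rabs_pos_lt _ hl).
  replace ((Rabs (1 - k) * PI / k + Rabs a / d) / Rabs lam)
    with (Rabs (1 - k) * (PI / (k * Rabs lam)) + Rabs a / (d * Rabs lam)) by (field; lra).
  pose proof (Rabs_pos (1 - k)).
  apply Rplus_le_compat; [apply Rmult_le_compat_l|]; assumption.
Qed.

Theorem mainTheorem3 (k d a : R) (hk : 0 < k) (hd : 0 < d) (ha : 0 < a) :
  exists Lam : R, 0 < Lam /\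
    forall lam : R, Rabs lam > Lam ->
      ~ (exists p q : R, 0 <= p /\
           exists (pr_re : Riemann_integrable (disp_re k a d lam p q) (-1) 1)
                  (pr_im : Riemann_integrable (disp_im k a d lam p q) (-1) 1),
             / 2 * RiemannInt pr_re = 1 /\ / 2 * RiemannInt pr_im = 0).
Proof.
  set (X := Rabs (1 - k) * PI / k + Rabs a / d).
  assert (hX : 0 <= X).
  { pose proof PI_RGT_0; pose proof (Rabs_pos (1 - k)); pose proof (Rabs_pos a).
    unfold X, Rdiv. apply Rplus_le_le_0_compat; apply Rmult_le_pos;
      try apply Rmult_le_pos; try (left; apply Rinv_0_lt_compat); lra. }
  exists (X + 1); split; [lra|].
  intros lam hlam [p [q [hp [pr_re [pr_im [hre _]]]]]].
  assert (hl : lam <> 0) by (intros ->; rewrite Rabs_R0 in hlam; lra).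
  rewrite <- RInt_Reals in hre.
  pose proof (RInt_disp_re_le k a d lam p q hk hd hp hl (ex_RInt_Reals_1 _ _ _ pr_re)) as hle.
  assert (hsmall : X / Rabs lam < 1)
    by (apply Rmult_lt_reg_r with (Rabs lam); [lra|]; field_simplify; lra).
  fold X in hle. lra.
Qed.
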